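(* Let $\alpha>0$, $\nu:=\nu(\alpha)$, $T:=T(\alpha)$, and let $(a_n)_{n\ge1}$ be a positive sequence with $\lim_{n\to\infty}a_ne^{-\nu n}=0$. Let $(\chi_t)_{t\ge1}$ be defined by $\chi_t:=\max\{a_t,\frac{t-1}{\alpha}\chi_1,\dots,\frac1\alpha\chi_{t-1}\}$ and set $c_t:=\chi_te^{-\nu t}$. Then there exists $t_1$ such that $c_t=c_{t+T}$ for all $t\ge t_1$.
   Context: For $\alpha>0$, let $T=T(\alpha)\in\mathbb N$ be the unique positive integer with $\frac{(T-1)^T}{T^{T-1}}<\alpha\le\frac{T^{T+1}}{(T+1)^T}$, and define $\nu(\alpha):=\frac1T\log\frac T\alpha$. *)

From Stdlib Require Import Reals Lra Lia List.
Open Scope R_scope.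

Definition is_T (alpha : R) (T : nat) : Prop :=
  (1 <= T)%nat /\
  (INR T - 1) ^ T / INR T ^ (T - 1) < alpha /\
  alpha <= INR T ^ (T + 1) / (INR T + 1) ^ T.

Definition nu (alpha : R) (T : nat) : R := / INR T * ln (INR T / alpha).

Definition chi_rhs (alpha : R) (a chi : nat -> R) (t : nat) : R :=
  fold_right Rmax (a t)
    (map (fun s => INR (t - s) / alpha * chi s) (seq 1 (t - 1))).

From Stdlib Require Import Reals List Lra Lia Classical.
Open Scope R_scope.

(* Write c_t = chi_t e^{-nu t} and w_k = (k / alpha) e^{-nu k}.  The recursion becomes
   c_t = max (a_t e^{-nu t}, max_{s<t} w_{t-s} c_s), and the choice of nu is exactly what
   makes w unimodal with maximum w_T = 1.  Hence c_t <= c_{t+T}, so c is bounded below,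
   the forcing term a_t e^{-nu t} eventually never attains the maximum, and far-back
   predecessors s <= t - 2T can be replaced by t - T.  So eventually every c_t is
   w_k c_{t-k} with 1 <= k <= 2T; as the factors w_k < 1 are bounded away from 1 and c
   is bounded below, c takes only finitely many values.  A sequence with finitely many
   values that is nondecreasing along t -> t + T is eventually T-periodic. *)

Lemma fold_Rmax_ge_default (l : list R) (d : R) : d <= fold_right Rmax d l.
Proof.
  induction l as [|x l IH]; simpl; [lra|].
  eapply Rle_trans; [exact IH|apply Rmax_r].
Qed.

Lemma fold_Rmax_ge_In (l : list R) (d x : R) : In x l -> x <= fold_right Rmax d l.
Proof.
  induction l as [|y l IH]; simpl; [tauto|]. intros [<-|Hx]; [apply Rmax_l|].
  eapply Rle_trans; [exact (IH Hx)|apply Rmax_r].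
Qed.

Lemma fold_Rmax_attained (l : list R) (d : R) :
  fold_right Rmax d l = d \/ In (fold_right Rmax d l) l.
Proof.
  induction l as [|y l IH]; simpl; [auto|].
  destruct (Rle_dec y (fold_right Rmax d l)) as [Hle|Hlt].
  - rewrite Rmax_right by exact Hle. destruct IH; auto.
  - rewrite Rmax_left by lra. auto.
Qed.

Lemma fold_Rmin_le_In (l : list R) (d x : R) : In x l -> fold_right Rmin d l <= x.
Proof.
  induction l as [|y l IH]; simpl; [tauto|]. intros [<-|Hx]; [apply Rmin_l|].
  eapply Rle_trans; [apply Rmin_r|exact (IH Hx)].
Qed.

Lemma fold_Rmin_pos (l : list R) (d : R) :
  0 < d -> (forall x, In x l -> 0 < x) -> 0 < fold_right Rmin d l.
Proof.
  intros Hd. induction l as [|y l IH]; simpl; intros Hl; [exact Hd|].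
  apply Rmin_glb_lt; auto.
Qed.

Lemma gap_below_one (l : list R) :
  (forall x, In x l -> x <= 1) ->
  exists d, 0 <= d < 1 /\ forall x, In x l -> x = 1 \/ x <= d.
Proof.
  induction l as [|y l IH]; intros Hl.
  - exists 0. split; [lra|]. intros x [].
  - destruct IH as [d [Hd Hx]]; [intros; apply Hl; simpl; auto|].
    assert (Hy : y <= 1) by (apply Hl; simpl; auto).
    destruct (Req_dec y 1) as [->|Hy1].
    + exists d. split; [exact Hd|]. intros x [<-|Hin]; auto.
    + exists (Rmax d y). split.
      * split; [eapply Rle_trans; [apply Hd|apply Rmax_l]|]. apply Rmax_lub_lt; lra.
      * intros x [<-|Hin]; [right; apply Rmax_r|].
        destruct (Hx x Hin); [left|right; eapply Rle_trans; [|apply Rmax_l]]; auto.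
Qed.

Lemma nat_antitone_eventually_constant (u : nat -> nat) (N : nat) :
  (forall t, (N <= t)%nat -> (u (S t) <= u t)%nat) ->
  exists t1, (N <= t1)%nat /\ forall t, (t1 <= t)%nat -> u (S t) = u t.
Proof.
  intros Hdec.
  assert (Hle : forall t d, (N <= t)%nat -> (u (t + d) <= u t)%nat).
  { intros t d Ht. induction d as [|d IH]; [rewrite Nat.add_0_r; lia|].
    rewrite Nat.add_succ_r. specialize (Hdec (t + d)%nat). lia. }
  enough (H : forall v t0, (N <= t0)%nat -> u t0 = v ->
            exists t1, (t0 <= t1)%nat /\ forall t, (t1 <= t)%nat -> u (S t) = u t).
  { destruct (H (u N) N) as [t1 [Ht1 Hc]]; eauto. }
  intros v. induction v as [v IH] using Wf_nat.lt_wf_ind. intros t0 Ht0 Hv.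
  destruct (classic (exists t, (t0 <= t)%nat /\ (u t < u t0)%nat)) as [[t [Ht Hlt]]|Hno].
  - destruct (IH (u t) ltac:(lia) t ltac:(lia) eq_refl) as [t1 [Ht1 Hc]].
    exists t1. split; [lia|exact Hc].
  - exists t0. split; [lia|]. intros t Ht.
    assert (H1 := Hle t0 (t - t0)%nat Ht0). assert (H2 := Hdec t ltac:(lia)).
    replace (t0 + (t - t0))%nat with t in H1 by lia.
    assert (~ (u (S t) < u t0)%nat) by (intros Hs; apply Hno; exists (S t); split; [lia|exact Hs]).
    lia.
Qed.

Fixpoint count_above (v : R) (l : list R) : nat :=
  match l with
  | nil => 0
  | x :: l' => ((if Rlt_dec v x then 1 else 0) + count_above v l')%nat
  end.

Lemma count_above_antitone (v v' : R) (l : list R) :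
  v <= v' -> (count_above v' l <= count_above v l)%nat.
Proof.
  intros Hv. induction l as [|x l IH]; simpl; [lia|].
  destruct (Rlt_dec v' x); destruct (Rlt_dec v x); try lia. lra.
Qed.

Lemma count_above_lt (v v' : R) (l : list R) :
  v < v' -> In v' l -> (count_above v' l < count_above v l)%nat.
Proof.
  intros Hv. induction l as [|x l IH]; simpl; [tauto|]. intros [->|Hin].
  - assert (count_above v' l <= count_above v l)%nat by (apply count_above_antitone; lra).
    destruct (Rlt_dec v' v'); [lra|]. destruct (Rlt_dec v v'); [lia|lra].
  - specialize (IH Hin). destruct (Rlt_dec v' x); destruct (Rlt_dec v x); try lia. lra.
Qed.

Fixpoint window_count (f : nat -> R) (l : list R) (t n : nat) : nat :=
  match n with
  | 0 => 0
  | S n' => (count_above (f t) l + window_count f l (S t) n')%nat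
  end.

Lemma window_count_slide (f : nat -> R) (l : list R) (t n : nat) :
  (window_count f l (S t) n + count_above (f t) l
   = window_count f l t n + count_above (f (t + n)%nat) l)%nat.
Proof.
  revert t. induction n as [|n IH]; intros t; simpl.
  - rewrite Nat.add_0_r. reflexivity.
  - specialize (IH (S t)). rewrite Nat.add_succ_r. simpl in IH. lia.
Qed.

(* The window count of length T is a nonincreasing potential, which drops whenever f t < f (t + T). *)
Lemma finite_valued_monotone_eventually_periodic (f : nat -> R) (l : list R) (T N : nat) :
  (forall t, (N <= t)%nat -> In (f t) l) ->
  (forall t, (N <= t)%nat -> f t <= f (t + T)%nat) ->
  exists t1, (N <= t1)%nat /\ forall t, (t1 <= t)%nat -> f t = f (t + T)%nat.
Proof.
  intros Hin Hle.
  destruct (nat_antitone_eventually_constant (fun t => window_count f l t T) N)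
    as [t1 [Ht1 Hconst]].
  { intros t Ht. assert (H := window_count_slide f l t T).
    assert (count_above (f (t + T)%nat) l <= count_above (f t) l)%nat
      by (apply count_above_antitone, Hle, Ht).
    lia. }
  exists t1. split; [exact Ht1|]. intros t Ht.
  destruct (Rle_lt_dec (f (t + T)%nat) (f t)) as [Hge|Hlt].
  - specialize (Hle t ltac:(lia)). lra.
  - exfalso. assert (H := window_count_slide f l t T). specialize (Hconst t Ht).
    assert (count_above (f (t + T)%nat) l < count_above (f t) l)%nat
      by (apply count_above_lt; [exact Hlt|apply Hin; lia]).
    simpl in Hconst. lia.
Qed.

Fixpoint products (W L : list R) (j : nat) : list R :=
  match j with
  | 0 => L
  | S j' => products W L j' ++ flat_map (fun y => map (fun x => x * y) W) (products W L j')
  end.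

Lemma products_incl (W L : list R) (j d : nat) (y : R) :
  In y (products W L j) -> In y (products W L (j + d)).
Proof.
  induction d as [|d IH]; intros Hy; [rewrite Nat.add_0_r; exact Hy|].
  rewrite Nat.add_succ_r. simpl. apply in_or_app. auto.
Qed.

Lemma products_mul (W L : list R) (j : nat) (x y : R) :
  In x W -> In y (products W L j) -> In (x * y) (products W L (S j)).
Proof.
  intros Hx Hy. simpl. apply in_or_app. right. apply in_flat_map.
  exists y. split; [exact Hy|]. apply in_map_iff. exists x. auto.
Qed.

Lemma values_in_finite_list (c w : nat -> R) (K N : nat) (m0 : R) :
  0 < m0 -> (forall t, (N <= t)%nat -> m0 <= c t) -> (forall k, w k <= 1) ->
  (forall t, (N + K <= t)%nat ->
     exists k, (1 <= k <= K)%nat /\ c t = w k * c (t - k)%nat) ->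
  exists l, forall t, (N <= t)%nat -> In (c t) l.
Proof.
  intros Hm0 Hlow Hw1 Hstep.
  set (W := map w (seq 1 K)).
  destruct (gap_below_one W) as [d [Hd Hgap]].
  { intros x Hx. apply in_map_iff in Hx. destruct Hx as [k [<- _]]. apply Hw1. }
  set (L0 := map c (seq N K)).
  set (B := fold_right Rmax m0 L0).
  assert (HB : m0 <= B) by apply fold_Rmax_ge_default.
  (* Each factor different from 1 costs a factor d < 1 in the bound below. *)
  assert (Hinv : forall t, (N <= t)%nat ->
            exists j, In (c t) (products W L0 j) /\ c t <= B * d ^ j).
  { intros t. induction t as [t IH] using Wf_nat.lt_wf_ind. intros Ht.
    destruct (Compare_dec.lt_dec t (N + K)) as [Hsmall|Hlarge].
    - assert (HL0 : In (c t) L0) by (apply in_map_iff; exists t; split; [|apply in_seq]; auto; lia).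
      exists 0%nat. simpl. rewrite Rmult_1_r. split; [exact HL0|]. apply fold_Rmax_ge_In, HL0.
    - destruct (Hstep t ltac:(lia)) as [k [Hk Hct]].
      destruct (IH (t - k)%nat ltac:(lia) ltac:(lia)) as [j [Hj Hbound]].
      assert (Hpos : 0 < c (t - k)%nat) by (specialize (Hlow (t - k)%nat ltac:(lia)); lra).
      assert (HW : In (w k) W) by (apply in_map_iff; exists k; split; [|apply in_seq]; auto; lia).
      destruct (Hgap (w k) HW) as [Hwk|Hwk].
      + exists j. rewrite Hct, Hwk, Rmult_1_l. auto.
      + exists (S j). rewrite Hct. split; [apply products_mul; auto|].
        simpl. assert (w k * c (t - k)%nat <= d * c (t - k)%nat) by (apply Rmult_le_compat_r; lra).
        assert (d * c (t - k)%nat <= d * (B * d ^ j)) by (apply Rmult_le_compat_l; lra).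
        lra. }
  destruct (pow_lt_1_zero d ltac:(rewrite Rabs_right; lra) (m0 / B)
              ltac:(apply Rdiv_lt_0_compat; lra)) as [J HJ].
  exists (products W L0 J). intros t Ht.
  destruct (Hinv t Ht) as [j [Hj Hbound]].
  destruct (Compare_dec.le_lt_dec J j) as [HjJ|HjJ].
  - exfalso. specialize (HJ j HjJ). specialize (Hlow t Ht).
    rewrite Rabs_right in HJ by (apply Rle_ge, pow_le; lra).
    apply (Rmult_lt_compat_l B) in HJ; [|lra].
    replace (B * (m0 / B)) with m0 in HJ by (field; lra). lra.
  - replace J with (j + (J - j))%nat by lia. apply products_incl, Hj.
Qed.

Section MaxRecursion.

Variables (w c b : nat -> R) (T : nat).
Hypothesis T_pos : (1 <= T)%nat.
Hypothesis w_T : w T = 1.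
Hypothesis w_le_1 : forall k, w k <= 1.
Hypothesis w_shift : forall k, (2 * T <= k)%nat -> w k <= w (k - T)%nat.
Hypothesis c_pos : forall t, (1 <= t)%nat -> 0 < c t.
Hypothesis c_ge_kernel :
  forall s t, (1 <= s)%nat -> (s < t)%nat -> w (t - s)%nat * c s <= c t.
Hypothesis c_attained : forall t, (1 <= t)%nat ->
  c t = b t \/ exists s, (1 <= s)%nat /\ (s < t)%nat /\ c t = w (t - s)%nat * c s.
Hypothesis b_vanishes : Un_cv b 0.

Lemma c_le_shift t : (1 <= t)%nat -> c t <= c (t + T)%nat.
Proof.
  intros Ht. assert (H := c_ge_kernel t (t + T) Ht ltac:(lia)).
  replace (t + T - t)%nat with T in H by lia. rewrite w_T in H. lra.
Qed.

Lemma c_le_shift_back t : (T < t)%nat -> c (t - T)%nat <= c t.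
Proof.
  intros Ht. assert (H := c_le_shift (t - T) ltac:(lia)).
  replace (t - T + T)%nat with t in H by lia. exact H.
Qed.

Lemma c_lower_bound : exists m0, 0 < m0 /\ forall t, (1 <= t)%nat -> m0 <= c t.
Proof.
  exists (fold_right Rmin 1 (map c (seq 1 T))). split.
  - apply fold_Rmin_pos; [lra|]. intros x Hx. apply in_map_iff in Hx.
    destruct Hx as [s [<- Hs]]. apply in_seq in Hs. apply c_pos. lia.
  - intros t. induction t as [t IH] using Wf_nat.lt_wf_ind. intros Ht.
    destruct (Compare_dec.le_lt_dec t T) as [HtT|HtT].
    + apply fold_Rmin_le_In, in_map_iff. exists t. split; [reflexivity|]. apply in_seq. lia.
    + eapply Rle_trans; [apply (IH (t - T)%nat); lia|apply c_le_shift_back, HtT].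
Qed.

(* A predecessor s <= t - 2T can be replaced by t - T, since w (t - s) <= w (t - s - T). *)
Lemma c_eventually_short_steps (m0 : R) :
  0 < m0 -> (forall t, (1 <= t)%nat -> m0 <= c t) ->
  exists N, (1 <= N)%nat /\ forall t, (N + 2 * T <= t)%nat ->
    exists k, (1 <= k <= 2 * T)%nat /\ c t = w k * c (t - k)%nat.
Proof.
  intros Hm0 Hlow.
  destruct (b_vanishes m0 Hm0) as [N1 HN1].
  exists (S N1). split; [lia|]. intros t Ht.
  assert (Hback : c (t - T)%nat <= c t) by (apply c_le_shift_back; lia).
  destruct (c_attained t ltac:(lia)) as [Hb|[s [Hs1 [Hst Hcs]]]].
  - exfalso. specialize (HN1 t ltac:(lia)). unfold R_dist in HN1.
    rewrite Rminus_0_r in HN1. apply Rabs_def2 in HN1.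
    specialize (Hlow (t - T)%nat ltac:(lia)). lra.
  - destruct (Compare_dec.le_lt_dec (2 * T) (t - s)) as [Hfar|Hnear].
    + exists T. split; [lia|]. rewrite w_T, Rmult_1_l.
      assert (H := c_ge_kernel s (t - T) Hs1 ltac:(lia)).
      replace (t - T - s)%nat with (t - s - T)%nat in H by lia.
      assert (w (t - s)%nat * c s <= w (t - s - T)%nat * c s)
        by (apply Rmult_le_compat_r; [apply Rlt_le, c_pos, Hs1|apply w_shift, Hfar]).
      lra.
    + exists (t - s)%nat. split; [lia|].
      replace (t - (t - s))%nat with s by lia. exact Hcs.
Qed.

Theorem max_recursion_eventually_periodic :
  exists t1, (1 <= t1)%nat /\ forall t, (t1 <= t)%nat -> c t = c (t + T)%nat.
Proof.
  destruct c_lower_bound as [m0 [Hm0 Hlow]].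
  destruct (c_eventually_short_steps m0 Hm0 Hlow) as [N [HN Hsteps]].
  destruct (values_in_finite_list c w (2 * T) N m0 Hm0) as [l Hl];
    [intros t Ht; apply Hlow; lia|exact w_le_1|exact Hsteps|].
  destruct (finite_valued_monotone_eventually_periodic c l T N Hl) as [t1 [Ht1 Hper]].
  { intros t Ht. apply c_le_shift. lia. }
  exists t1. split; [lia|exact Hper].
Qed.

End MaxRecursion.

Lemma pow_lt_compat_l (x y : R) (n : nat) : 0 <= x < y -> (1 <= n)%nat -> x ^ n < y ^ n.
Proof.
  intros [Hx Hxy] Hn. induction n as [|n IH]; [lia|].
  destruct n as [|n]; [simpl; lra|].
  specialize (IH ltac:(lia)). assert (0 <= x ^ S n) by (apply pow_le; lra).
  change (x * x ^ S n < y * y ^ S n). nra.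
Qed.

Lemma exp_INR_mul (n : nat) (x : R) : exp (INR n * x) = exp x ^ n.
Proof.
  induction n as [|n IH]; [simpl; rewrite Rmult_0_l; apply exp_0|].
  rewrite S_INR, Rmult_plus_distr_r, Rmult_1_l, exp_plus, IH. simpl. ring.
Qed.

Definition growth (alpha : R) (T : nat) : R := exp (nu alpha T).

Definition kernel (alpha : R) (T k : nat) : R := INR k / alpha * exp (- nu alpha T * INR k).

Definition scaled (alpha : R) (T : nat) (chi : nat -> R) (t : nat) : R :=
  chi t * exp (- nu alpha T * INR t).

Section Kernel.

Variables (alpha : R) (T : nat).
Hypothesis alpha_pos : 0 < alpha.
Hypothesis T_spec : is_T alpha T.

Let q := growth alpha T.

Lemma growth_pos : 0 < q.
Proof. apply exp_pos. Qed.

Lemma T_ge_1 : (1 <= T)%nat.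
Proof. apply T_spec. Qed.

Lemma INR_T_ge_1 : 1 <= INR T.
Proof. apply (le_INR 1), T_ge_1. Qed.

Lemma growth_pow_T : q ^ T = INR T / alpha.
Proof.
  unfold q, growth, nu. rewrite <- exp_INR_mul.
  assert (0 < INR T) by (pose proof INR_T_ge_1; lra).
  rewrite <- Rmult_assoc, Rinv_r, Rmult_1_l by lra.
  apply exp_ln, Rdiv_lt_0_compat; lra.
Qed.

(* These are the two inequalities defining T(alpha), after taking T-th roots. *)
Lemma growth_bounds : INR T + 1 <= INR T * q /\ (INR T - 1) * q < INR T.
Proof.
  destruct T_spec as [HT [Hlow Hup]].
  pose proof INR_T_ge_1 as HT1. pose proof growth_pos as Hq. pose proof growth_pow_T as HqT.
  assert (HTT : INR T ^ T = INR T * INR T ^ (T - 1)).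
  { destruct T as [|T']; [lia|]. simpl. rewrite Nat.sub_0_r. reflexivity. }
  assert (Hp : 0 < INR T ^ (T - 1)) by (apply pow_lt; lra).
  assert (Hp1 : 0 < (INR T + 1) ^ T) by (apply pow_lt; lra).
  split.
  - destruct (Rle_lt_dec (INR T + 1) (INR T * q)) as [Hle|Hlt]; [exact Hle|exfalso].
    assert (H := pow_lt_compat_l (INR T * q) (INR T + 1) T ltac:(split; nra) HT).
    rewrite Rpow_mult_distr, HqT in H.
    rewrite Nat.add_1_r in Hup. simpl in Hup.
    apply (Rmult_le_compat_r ((INR T + 1) ^ T)) in Hup; [|lra].
    replace (INR T * INR T ^ T / (INR T + 1) ^ T * (INR T + 1) ^ T)
      with (INR T ^ T * (INR T / alpha) * alpha) in Hup by (field; lra).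
    nra.
  - destruct (Rle_lt_dec (INR T) ((INR T - 1) * q)) as [Hge|Hlt]; [exfalso|exact Hlt].
    assert (H := pow_incr (INR T) ((INR T - 1) * q) T ltac:(split; lra)).
    rewrite Rpow_mult_distr, HqT in H.
    apply (Rmult_lt_compat_r (INR T ^ (T - 1))) in Hlow; [|lra].
    replace ((INR T - 1) ^ T / INR T ^ (T - 1) * INR T ^ (T - 1))
      with ((INR T - 1) ^ T * (INR T / alpha) * alpha / INR T) in Hlow by (field; lra).
    apply (Rmult_lt_compat_r (INR T)) in Hlow; [|lra].
    replace ((INR T - 1) ^ T * (INR T / alpha) * alpha / INR T * INR T)
      with ((INR T - 1) ^ T * (INR T / alpha) * alpha) in Hlow by (field; lra).
    nra.
Qed.

Lemma kernel_eq k : kernel alpha T k = INR k / alpha / q ^ k.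
Proof.
  unfold kernel, q, growth, Rdiv. rewrite <- exp_INR_mul, <- exp_Ropp.
  do 2 f_equal. ring.
Qed.

Lemma kernel_T : kernel alpha T T = 1.
Proof.
  rewrite kernel_eq, growth_pow_T. pose proof INR_T_ge_1. field. lra.
Qed.

Lemma kernel_nonneg k : 0 <= kernel alpha T k.
Proof.
  rewrite kernel_eq. unfold Rdiv.
  apply Rmult_le_pos; [apply Rmult_le_pos; [apply pos_INR|]|];
    apply Rlt_le, Rinv_0_lt_compat; [exact alpha_pos|apply pow_lt, growth_pos].
Qed.

Lemma kernel_succ m : kernel alpha T (S m) * (INR m * q) = kernel alpha T m * (INR m + 1).
Proof.
  rewrite !kernel_eq, S_INR. simpl. pose proof (pow_lt q m growth_pos). pose proof growth_pos.
  field. lra.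
Qed.

Lemma growth_gt_1 : 1 < q.
Proof. pose proof growth_bounds. pose proof INR_T_ge_1. nra. Qed.

Lemma kernel_antitone_step m : (T <= m)%nat -> kernel alpha T (S m) <= kernel alpha T m.
Proof.
  intros Hm. pose proof (kernel_succ m). pose proof (kernel_nonneg m).
  pose proof growth_bounds. pose proof growth_gt_1. pose proof INR_T_ge_1.
  assert (HTm : INR T <= INR m) by (apply le_INR, Hm).
  assert (Hq : INR m + 1 <= INR m * q) by nra.
  nra.
Qed.

Lemma kernel_monotone_step m : (S m <= T)%nat -> kernel alpha T m <= kernel alpha T (S m).
Proof.
  intros Hm. destruct m as [|m].
  - rewrite kernel_eq. unfold Rdiv. simpl. rewrite !Rmult_0_l. apply kernel_nonneg.
  - pose proof (kernel_succ (S m)). pose proof (kernel_nonneg (S (S m))).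
    pose proof growth_bounds. pose proof growth_gt_1.
    assert (HmT : INR (S m) + 1 <= INR T) by (rewrite <- S_INR; apply le_INR, Hm).
    assert (Hm1 : 1 <= INR (S m)) by apply (le_INR 1), le_n_S, Nat.le_0_l.
    assert (Hq : INR (S m) * q <= INR (S m) + 1) by nra.
    nra.
Qed.

Lemma kernel_antitone m d : (T <= m)%nat -> kernel alpha T (m + d) <= kernel alpha T m.
Proof.
  intros Hm. induction d as [|d IH]; [rewrite Nat.add_0_r; lra|].
  rewrite Nat.add_succ_r. eapply Rle_trans; [apply kernel_antitone_step; lia|exact IH].
Qed.

Lemma kernel_monotone m d : (m + d <= T)%nat -> kernel alpha T m <= kernel alpha T (m + d).
Proof.
  intros Hm. induction d as [|d IH]; [rewrite Nat.add_0_r; lra|].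
  rewrite Nat.add_succ_r. eapply Rle_trans; [apply IH; lia|apply kernel_monotone_step; lia].
Qed.

Lemma kernel_le_1 k : kernel alpha T k <= 1.
Proof.
  rewrite <- kernel_T. destruct (Compare_dec.le_lt_dec T k) as [Hk|Hk].
  - replace k with (T + (k - T))%nat by lia. apply kernel_antitone. lia.
  - pose proof (kernel_monotone k (T - k) ltac:(lia)) as H.
    replace (k + (T - k))%nat with T in H by lia. exact H.
Qed.

Lemma kernel_shift k : (2 * T <= k)%nat -> kernel alpha T k <= kernel alpha T (k - T).
Proof.
  intros Hk. replace k with ((k - T) + T)%nat at 1 by lia. apply kernel_antitone. lia.
Qed.

End Kernel.

Section ScaledRecursion.

Variables (alpha : R) (T : nat) (a chi : nat -> R).
Hypothesis chi_rec : forall t : nat, (1 <= t)%nat -> chi t = chi_rhs alpha a chi t.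

Lemma scaled_term s t : (s <= t)%nat ->
  INR (t - s) / alpha * chi s * exp (- nu alpha T * INR t)
  = kernel alpha T (t - s) * scaled alpha T chi s.
Proof.
  intros Hst. unfold kernel, scaled.
  replace (INR t) with (INR (t - s) + INR s) at 1 by (rewrite <- plus_INR; f_equal; lia).
  rewrite Rmult_plus_distr_l, exp_plus. ring.
Qed.

Lemma scaled_ge_kernel s t : (1 <= s)%nat -> (s < t)%nat ->
  kernel alpha T (t - s) * scaled alpha T chi s <= scaled alpha T chi t.
Proof.
  intros Hs Hst. rewrite <- scaled_term by lia. unfold scaled.
  apply Rmult_le_compat_r; [apply Rlt_le, exp_pos|].
  rewrite (chi_rec t) by lia. apply fold_Rmax_ge_In, in_map_iff.
  exists s. split; [reflexivity|]. apply in_seq. lia.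
Qed.

Lemma scaled_attained t : (1 <= t)%nat ->
  scaled alpha T chi t = a t * exp (- nu alpha T * INR t) \/
  exists s, (1 <= s)%nat /\ (s < t)%nat /\
    scaled alpha T chi t = kernel alpha T (t - s) * scaled alpha T chi s.
Proof.
  intros Ht.
  replace (scaled alpha T chi t) with (chi_rhs alpha a chi t * exp (- nu alpha T * INR t))
    by (unfold scaled; rewrite <- chi_rec; auto).
  unfold chi_rhs.
  destruct (fold_Rmax_attained (map (fun s => INR (t - s) / alpha * chi s) (seq 1 (t - 1))) (a t))
    as [->|Hin]; [left; reflexivity|right].
  apply in_map_iff in Hin. destruct Hin as [s [<- Hin]]. apply in_seq in Hin.
  exists s. split; [lia|split; [lia|]]. apply scaled_term. lia.
Qed.

Lemma scaled_pos t : (forall n, (1 <= n)%nat -> 0 < a n) -> (1 <= t)%nat ->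
  0 < scaled alpha T chi t.
Proof.
  intros Ha Ht. unfold scaled. apply Rmult_lt_0_compat; [|apply exp_pos].
  rewrite (chi_rec t Ht). eapply Rlt_le_trans; [apply (Ha t Ht)|apply fold_Rmax_ge_default].
Qed.

End ScaledRecursion.

Theorem proposition1 (alpha : R) (T : nat) (a chi : nat -> R) :
  0 < alpha ->
  is_T alpha T ->
  (forall n : nat, (1 <= n)%nat -> 0 < a n) ->
  Un_cv (fun n => a n * exp (- nu alpha T * INR n)) 0 ->
  (forall t : nat, (1 <= t)%nat -> chi t = chi_rhs alpha a chi t) ->
  exists t1 : nat, (1 <= t1)%nat /\
    forall t : nat, (t1 <= t)%nat ->
      chi t * exp (- nu alpha T * INR t) =
      chi (t + T)%nat * exp (- nu alpha T * INR (t + T)).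
Proof.
  intros Halpha HT Ha Hcv Hchi.
  apply (max_recursion_eventually_periodic (kernel alpha T) (scaled alpha T chi)
           (fun n => a n * exp (- nu alpha T * INR n)) T).
  - exact (T_ge_1 alpha T HT).
  - exact (kernel_T alpha T Halpha HT).
  - exact (kernel_le_1 alpha T Halpha HT).
  - exact (kernel_shift alpha T Halpha HT).
  - intros t. exact (scaled_pos alpha T a chi Hchi t Ha).
  - exact (scaled_ge_kernel alpha T a chi Hchi).
  - exact (scaled_attained alpha T a chi Hchi).
  - exact Hcv.
Qed.
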